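(* Let $E$ and $F$ be Banach lattices. If each weak Dunford–Pettis operator from $E$ into $F$ is uaw-Dunford–Pettis, then the norm of $E'$ is order continuous or the norm of $F$ is order continuous.
   Context: All operators are continuous linear operators. A net $(x_\alpha)$ in a Banach lattice $E$ is uaw-convergent to $x$ (written $x_\alpha\xrightarrow{uaw}x$) if $|x_\alpha-x|\wedge u\to 0$ weakly for every $u\in E_+$. An operator $T$ from a Banach lattice $E$ into a Banach space $X$ is uaw-Dunford–Pettis if for every norm bounded sequence $(x_n)$ in $E$ with $x_n\xrightarrow{uaw}0$ one has $\|Tx_n\|\to 0$. An operator $T:X\to Y$ between Banach spaces is weak Dunford–Pettis if $f_n(Tx_n)\to 0$ for every weakly null sequence $(x_n)$ in $X$ and every weakly null sequence $(f_n)$ in $Y'$. *)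

From HB Require Import structures.
From mathcomp Require Import all_boot all_order all_algebra.
From mathcomp Require Import all_classical all_reals all_analysis.
Set Implicit Arguments. Unset Strict Implicit. Unset Printing Implicit Defensive.
Import Order.TTheory GRing.Theory Num.Theory.
Import numFieldNormedType.Exports.
Local Open Scope classical_set_scope.
Local Open Scope ring_scope.

Record BLattice (R : realType) (E : completeNormedModType R) := {
  ble : E -> E -> Prop;
  bjoin : E -> E -> E;
  ble_refl : forall x, ble x x;
  ble_anti : forall x y, ble x y -> ble y x -> x = y;
  ble_trans : forall x y z, ble x y -> ble y z -> ble x z;
  ble_add : forall x y z, ble x y -> ble (x + z) (y + z);
  ble_scale : forall (a : R) x y, 0 <= a -> ble x y -> ble (a *: x) (a *: y);
  bjoin_ubl : forall x y, ble x (bjoin x y);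
  bjoin_ubr : forall x y, ble y (bjoin x y);
  bjoin_lub : forall x y z, ble x z -> ble y z -> ble (bjoin x y) z;
  bnorm_mono : forall x y, ble (bjoin x (- x)) (bjoin y (- y)) -> `|x| <= `|y|
}.
Arguments BLattice R E : clear implicits.

Section BL.
Variables (R : realType) (E : completeNormedModType R) (L : BLattice R E).
Definition babs (x : E) : E := bjoin L x (- x).
Definition bmeet (x y : E) : E := - bjoin L (- x) (- y).
End BL.

Definition is_dual (R : realType) (X : normedModType R) (f : X -> R) : Prop :=
  (forall (a : R) (x y : X), f (a *: x + y) = a * f x + f y) /\ continuous f.

Definition dnorm (R : realType) (X : normedModType R) (f : X -> R) : R :=
  sup [set `|f x| | x in [set x : X | `|x| <= 1]].

Definition is_bidual (R : realType) (X : normedModType R)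
    (phi : (X -> R) -> R) : Prop :=
  (forall (a : R) (f g : X -> R), is_dual f -> is_dual g ->
      phi (fun x => a * f x + g x) = a * phi f + phi g) /\
  exists C : R, forall f : X -> R, is_dual f -> `|phi f| <= C * dnorm f.

Definition weakly_null (R : realType) (X : normedModType R) (x : nat -> X) :=
  forall f : X -> R, is_dual f -> (fun n => f (x n)) @ \oo --> (0 : R).

Definition dual_weakly_null (R : realType) (X : normedModType R)
    (f : nat -> X -> R) :=
  (forall n, is_dual (f n)) /\
  forall phi : (X -> R) -> R, is_bidual phi ->
    (fun n => phi (f n)) @ \oo --> (0 : R).

Definition is_operator (R : realType) (X Y : normedModType R) (T : X -> Y) :=
  (forall (a : R) (x y : X), T (a *: x + y) = a *: T x + T y) /\ continuous T.

Definition weak_DP (R : realType) (X Y : normedModType R) (T : X -> Y) :=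
  forall (x : nat -> X) (f : nat -> Y -> R),
    weakly_null x -> dual_weakly_null f ->
    (fun n => f n (T (x n))) @ \oo --> (0 : R).

Definition uaw_null (R : realType) (E : completeNormedModType R)
    (L : BLattice R E) (x : nat -> E) :=
  forall u : E, ble L 0 u -> weakly_null (fun n => bmeet L (babs L (x n)) u).

Definition uaw_DP (R : realType) (E : completeNormedModType R)
    (L : BLattice R E) (Y : normedModType R) (T : E -> Y) :=
  forall x : nat -> E, (exists M : R, forall n, `|x n| <= M) ->
    uaw_null L x -> (fun n => `|T (x n)|) @ \oo --> (0 : R).

Definition directed (I : Type) (leI : I -> I -> Prop) : Prop :=
  (exists i : I, True) /\
  (forall i, leI i i) /\
  (forall i j k, leI i j -> leI j k -> leI i k) /\
  (forall i j, exists k, leI i k /\ leI j k).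

Definition order_continuous_norm (R : realType) (E : completeNormedModType R)
    (L : BLattice R E) : Prop :=
  forall (I : Type) (leI : I -> I -> Prop) (x : I -> E),
    directed leI ->
    (forall i j, leI i j -> ble L (x j) (x i)) ->
    (forall i, ble L 0 (x i)) ->
    (forall z, (forall i, ble L z (x i)) -> ble L z 0) ->
    forall eps : R, 0 < eps -> exists i0, forall i, leI i0 i -> `|x i| <= eps.

Definition dle (R : realType) (E : completeNormedModType R) (L : BLattice R E)
    (f g : E -> R) : Prop :=
  forall x, ble L 0 x -> f x <= g x.

Definition dual_order_continuous_norm (R : realType)
    (E : completeNormedModType R) (L : BLattice R E) : Prop :=
  forall (I : Type) (leI : I -> I -> Prop) (f : I -> E -> R),
    directed leI ->
    (forall i, is_dual (f i)) ->
    (forall i j, leI i j -> dle L (f j) (f i)) ->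
    (forall i, dle L (fun _ => 0) (f i)) ->
    (forall h, is_dual h -> (forall i, dle L h (f i)) -> dle L h (fun _ => 0)) ->
    forall eps : R, 0 < eps -> exists i0, forall i, leI i0 i -> dnorm (f i) <= eps.

From HB Require Import structures.
From mathcomp Require Import all_boot all_order all_algebra.
From mathcomp Require Import all_classical all_reals all_analysis.
From mathcomp Require Import ring lra.
Import Order.TTheory GRing.Theory Num.Theory.
Import numFieldNormedType.Exports.
Local Open Scope classical_set_scope.
Local Open Scope ring_scope.
Set Implicit Arguments. Unset Strict Implicit.

(* If F <> 0, every rank-one operator x |-> f x *: y is weak Dunford-Pettis, so
   by hypothesis it is uaw-Dunford-Pettis: norm-bounded uaw-null sequences of E
   are weakly null.  Positive disjoint sequences (d_n) are uaw-null, since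
   |d_n| /\ u is a disjoint sequence in [0, u] whose partial sums stay below u.
   Hence every bounded positive disjoint sequence of E is weakly null, and this
   forces the norm of E' to be order continuous.  Otherwise take a net f_i
   decreasing to 0 in E' with ||f_i|| > eps; by the Riesz-Kantorovich formula
   for its infimum, f_i -> 0 pointwise, so one can choose indices
   i_0 <= i_1 <= ... and positive unit vectors x_n with f_(i_n)(x_n) > eps and
   f_(i_n)(x_0 + ... + x_(n-1)) < eps / 4^(n+1).  With u = sum_k 2^-k x_k, the
   vectors y_n = (x_n - 4^n (x_0 + ... + x_(n-1)) - 2^-n u)^+ are disjoint and
   bounded, yet f_(i_0)(y_n) >= 3 eps / 4 - 2^-n f_(i_0)(u).  If F = 0 its norm
   is trivially order continuous. *)

Section BanachLatticeTheory.
Variables (R : realType) (E : completeNormedModType R) (L : BLattice R E).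
Local Notation le := (ble L).
Local Notation join := (bjoin L).
Local Notation meet := (bmeet L).
Local Notation abs := (babs L).

Definition bpos (x : E) : E := join x 0.
Definition bneg (x : E) : E := join (- x) 0.

Definition pairwise_disjoint (d : nat -> E) : Prop :=
  forall n m, n != m -> meet (d n) (d m) = 0.

Lemma bleDl x y z : le x y -> le (z + x) (z + y).
Proof. by rewrite ![z + _]addrC; apply: ble_add. Qed.

Lemma bleD x y z w : le x y -> le z w -> le (x + z) (y + w).
Proof. by move=> /(ble_add z) xy /(bleDl y); apply: ble_trans. Qed.

Lemma ble0D x y : le 0 x -> le 0 y -> le 0 (x + y).
Proof. by move=> x0 /(bleD x0); rewrite addr0. Qed.

Lemma ble0_sum (I : Type) (r : seq I) (P : pred I) (F : I -> E) :
  (forall i, P i -> le 0 (F i)) -> le 0 (\sum_(i <- r | P i) F i).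
Proof. by move=> F_ge0; apply: big_ind => //; [apply: ble_refl|apply: ble0D]. Qed.

Lemma ble0Z a x : 0 <= a -> le 0 x -> le 0 (a *: x).
Proof. by move=> a0 /(ble_scale a0); rewrite scaler0. Qed.

Lemma ble_subr_ge0 x y : le 0 (y - x) <-> le x y.
Proof.
split=> [/(ble_add x)|/(ble_add (- x))]; first by rewrite add0r subrK.
by rewrite subrr.
Qed.

Lemma bleN2 x y : le (- x) (- y) <-> le y x.
Proof.
suff N2 u v : le u v -> le (- v) (- u) by split=> /N2; rewrite ?opprK.
by move=> /(ble_add (- u - v)); rewrite addrA subrr add0r addrCA subrr addr0.
Qed.

Lemma ble_subr_pos a x y : le 0 a -> le x y -> le (x - a) y.
Proof.
move=> a0; apply: ble_trans; rewrite -[X in le _ X]addr0; apply: bleDl.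
by rewrite -oppr0 bleN2.
Qed.

Lemma ble_subr_addr x y z : le x (y - z) <-> le (x + z) y.
Proof.
by split=> [/(ble_add z)|/(ble_add (- z))]; rewrite ?subrK ?addrK.
Qed.

Lemma bjoinC x y : join x y = join y x.
Proof.
by apply: ble_anti; apply: bjoin_lub; first [exact: bjoin_ubl|exact: bjoin_ubr].
Qed.

Lemma bjoin_l x y : le y x -> join x y = x.
Proof.
by move=> yx; apply: ble_anti; [apply: bjoin_lub => //; apply: ble_refl|apply: bjoin_ubl].
Qed.

Lemma bjoin_le2 x y x' y' : le x x' -> le y y' -> le (join x y) (join x' y').
Proof.
move=> xx' yy'; apply: bjoin_lub.
- by apply: ble_trans xx' _; apply: bjoin_ubl.
- by apply: ble_trans yy' _; apply: bjoin_ubr.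
Qed.

Lemma bjoinDr x y z : join (x + z) (y + z) = join x y + z.
Proof.
apply: ble_anti.
  by apply: bjoin_lub; apply: ble_add; [apply: bjoin_ubl|apply: bjoin_ubr].
apply/ble_subr_addr; apply: bjoin_lub; apply/ble_subr_addr;
  [apply: bjoin_ubl|apply: bjoin_ubr].
Qed.

Lemma bjoinZ a x y : 0 < a -> join (a *: x) (a *: y) = a *: join x y.
Proof.
move=> a0; have a_neq0 := lt0r_neq0 a0; have ai0 : 0 <= a^-1 by rewrite invr_ge0 ltW.
apply: ble_anti.
  by apply: bjoin_lub; apply: ble_scale (ltW a0) _; [apply: bjoin_ubl|apply: bjoin_ubr].
suff : le (join x y) (a^-1 *: join (a *: x) (a *: y)).
  by move=> /(ble_scale (ltW a0)); rewrite scalerKV.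
apply: bjoin_lub.
- by rewrite -[X in le X _](scalerK a_neq0 x); apply: ble_scale ai0 _; apply: bjoin_ubl.
- by rewrite -[X in le X _](scalerK a_neq0 y); apply: ble_scale ai0 _; apply: bjoin_ubr.
Qed.

Lemma bmeet_lbl x y : le (meet x y) x.
Proof. by rewrite -[X in le _ X]opprK bleN2; apply: bjoin_ubl. Qed.

Lemma bmeet_lbr x y : le (meet x y) y.
Proof. by rewrite -[X in le _ X]opprK bleN2; apply: bjoin_ubr. Qed.

Lemma bmeet_glb x y z : le z x -> le z y -> le z (meet x y).
Proof.
by move=> zx zy; rewrite -[z]opprK bleN2; apply: bjoin_lub; rewrite bleN2.
Qed.

Lemma bmeetC x y : meet x y = meet y x.
Proof. by rewrite /bmeet bjoinC. Qed.

Lemma bmeetDr x y z : meet (x + z) (y + z) = meet x y + z.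
Proof. by rewrite /bmeet !opprD bjoinDr opprD opprK. Qed.

Lemma bmeetZ a x y : 0 < a -> meet (a *: x) (a *: y) = a *: meet x y.
Proof. by move=> a0; rewrite /bmeet -!scalerN bjoinZ // scalerN. Qed.

Lemma bmeet_le2 x y x' y' : le x x' -> le y y' -> le (meet x y) (meet x' y').
Proof.
move=> xx' yy'; apply: bmeet_glb.
- exact: ble_trans (bmeet_lbl _ _) xx'.
- exact: ble_trans (bmeet_lbr _ _) yy'.
Qed.

Lemma bmeet_ge0 x y : le 0 x -> le 0 y -> le 0 (meet x y).
Proof. exact: bmeet_glb. Qed.

Lemma addr_bjoin_bmeet x y : x + y = join x y + meet x y.
Proof.
have -> : join x y = join (- y) (- x) + (x + y).
  by rewrite -bjoinDr addrCA addNr addr0 addKr.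
by rewrite /bmeet (bjoinC (- y)) [_ + (x + y)]addrC addrK.
Qed.

Lemma bmeetDl_le a b c : le 0 a -> le 0 b -> le 0 c ->
  le (meet (a + b) c) (meet a c + meet b c).
Proof.
move=> a0 b0 c0; set w := meet (a + b) c.
have wc : le w c by apply: bmeet_lbr.
have w_c_le0 : le (w - c) 0.
  by apply/bleN2; rewrite oppr0 opprB; apply/ble_subr_ge0.
suff : le (w - meet a c) (meet b c) by move=> /(ble_add (meet a c)); rewrite subrK addrC.
have -> : w - meet a c = join (w - a) (w - c).
  by rewrite /bmeet opprK addrC -bjoinDr !(addrC _ w).
apply: bmeet_glb; apply: bjoin_lub.
- by move: (bmeet_lbl (a + b) c) => /(ble_add (- a)); rewrite addrAC subrr add0r.
- exact: ble_trans w_c_le0 b0.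
- exact: ble_subr_pos.
- exact: ble_trans w_c_le0 c0.
Qed.

Lemma babs_ge0 x : le 0 (abs x).
Proof.
have two_abs : le 0 (2 *: abs x).
  by rewrite -(subrr x) scaler_nat mulr2n; apply: bleD; [apply: bjoin_ubl|apply: bjoin_ubr].
have half0 : (0 : R) <= 2^-1 by rewrite invr_ge0.
by move: (ble0Z half0 two_abs); rewrite scalerA mulVf ?scale1r ?pnatr_eq0.
Qed.

Lemma babs_id x : le 0 x -> abs x = x.
Proof.
by move=> x0; rewrite /babs; apply: bjoin_l; apply: (ble_trans _ x0); rewrite -oppr0 bleN2.
Qed.

Lemma bnorm_babs_le x y : le (abs x) (abs y) -> `|x| <= `|y|.
Proof. exact: bnorm_mono. Qed.

Lemma bnorm_babs x : `|abs x| = `|x|.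
Proof.
have absK : abs (abs x) = abs x by apply/babs_id/babs_ge0.
by apply/eqP; rewrite eq_le; apply/andP; split; apply: bnorm_babs_le; rewrite absK; apply: ble_refl.
Qed.

Lemma bnorm_le x y : le 0 x -> le x y -> `|x| <= `|y|.
Proof.
move=> x0 xy; apply: bnorm_babs_le; rewrite (babs_id x0) babs_id //.
exact: ble_trans xy.
Qed.

Lemma bpos_ge0 x : le 0 (bpos x). Proof. exact: bjoin_ubr. Qed.

Lemma bneg_ge0 x : le 0 (bneg x). Proof. exact: bjoin_ubr. Qed.

Lemma bpos_id x : le 0 x -> bpos x = x. Proof. exact: bjoin_l. Qed.

Lemma bpos_le2 x y : le x y -> le (bpos x) (bpos y).
Proof. by move=> xy; apply: bjoin_le2 => //; apply: ble_refl. Qed.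

Lemma bpos_subr_bneg x : bpos x - bneg x = x.
Proof.
have -> : bpos x = bneg x + x by rewrite /bpos /bneg -bjoinDr addNr add0r bjoinC.
by rewrite addrAC subrr add0r.
Qed.

Lemma bposZ a x : 0 < a -> bpos (a *: x) = a *: bpos x.
Proof. by move=> a0; rewrite /bpos -bjoinZ // scaler0. Qed.

Lemma bnorm_bpos x : `|bpos x| <= `|x|.
Proof.
rewrite -[`|x|]bnorm_babs; apply: bnorm_le; first exact: bpos_ge0.
by apply: bjoin_lub; [apply: bjoin_ubl|apply: babs_ge0].
Qed.

Lemma bnorm_bneg x : `|bneg x| <= `|x|.
Proof.
rewrite -[`|x|]bnorm_babs; apply: bnorm_le; first exact: bneg_ge0.
by apply: bjoin_lub; [apply: bjoin_ubr|apply: babs_ge0].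
Qed.

Lemma bmeet_bpos_bneg x : meet (bpos x) (bneg x) = 0.
Proof.
rewrite -[bpos x](subrK (bneg x)) bpos_subr_bneg -[X in meet _ X]add0r bmeetDr.
by rewrite /bmeet oppr0 /bneg addNr.
Qed.

Lemma bmeet_ge0_eq0 x y : le 0 x -> le 0 y -> le (meet x y) 0 -> meet x y = 0.
Proof. by move=> x0 y0 /ble_anti; apply; apply: bmeet_ge0. Qed.

Lemma bmeet_disjointZ b x y : le 0 x -> le 0 y -> meet x y = 0 -> 1 <= b ->
  meet x (b *: y) = 0.
Proof.
move=> x0 y0 xy0 b1; have b0 : 0 < b by apply: lt_le_trans b1.
apply: bmeet_ge0_eq0 => //; first exact: ble0Z (ltW b0) y0.
rewrite -(scaler0 _ b) -xy0 -bmeetZ //; apply: bmeet_le2; last exact: ble_refl.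
by apply/ble_subr_ge0; rewrite -[X in _ - X]scale1r -scalerBl; apply: ble0Z; rewrite ?subr_ge0.
Qed.

Lemma bmeet_bpos_subr_eq0 x y a b : le 0 x -> le 0 y -> 0 < a -> 1 <= b -> 1 <= a * b ->
  meet (bpos (x - a *: y)) (bpos (y - b *: x)) = 0.
Proof.
move=> x0 y0 a0 b1 ab1; have b0 : 0 < b by apply: lt_le_trans b1.
set z := x - a *: y.
apply: bmeet_ge0_eq0; [exact: bpos_ge0|exact: bpos_ge0|].
rewrite -(bmeet_disjointZ (bpos_ge0 z) (bneg_ge0 z) (bmeet_bpos_bneg z) b1).
apply: bmeet_le2; first exact: ble_refl.
have -> : y - b *: x = b *: (b^-1 *: y - x) by rewrite scalerBr scalerKV ?gt_eqF.
rewrite bposZ //; apply: ble_scale (ltW b0) _; apply: bpos_le2.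
rewrite /z opprB; apply: ble_add; apply/ble_subr_ge0; rewrite -scalerBl.
apply: ble0Z y0; rewrite subr_ge0 -(ler_pM2r b0) mulVf ?gt_eqF //.
Qed.

End BanachLatticeTheory.

Section ContinuousLinearFunctionals.
Variables (R : realType) (X : normedModType R).

Lemma linear_continuousP (g : X -> R) :
  (forall a x y, g (a *: x + y) = a * g x + g y) ->
  continuous g <-> exists C, forall x, `|g x| <= C * `|x|.
Proof.
move=> g_lin.
pose gl : {linear X -> R} := HB.pack g (GRing.isLinear.Build R X R _ g g_lin).
split=> [g_cont|[C gC]].
  have /linear_boundedP [M [_ gM]] := @continuous_linear_bounded _ _ _ 0 gl (g_cont 0).
  by exists (`|M| + 1); apply: gM; rewrite (le_lt_trans (ler_norm M)) ?ltrDl.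
apply: (@bounded_linear_continuous _ _ _ gl); apply/linear_boundedP.
near=> r; have Cr : C <= r by near: r; apply: nbhs_pinfty_ge; rewrite num_real.
by move=> x; apply: le_trans (gC x) _; apply: ler_wpM2r.
Unshelve. all: by end_near.
Qed.

Variable f : X -> R.
Hypothesis f_dual : is_dual f.

Lemma dual0 : f 0 = 0.
Proof.
have := f_dual.1 1 0 0; rewrite scale1r addr0 mul1r -[X in X = _]addr0.
by move=> /addrI.
Qed.

Lemma dualD x y : f (x + y) = f x + f y.
Proof. by have := f_dual.1 1 x y; rewrite scale1r mul1r. Qed.

Lemma dualZ a x : f (a *: x) = a * f x.
Proof. by rewrite -[a *: x]addr0 f_dual.1 dual0 addr0. Qed.

Lemma dualN x : f (- x) = - f x.
Proof. by rewrite -scaleN1r dualZ mulN1r. Qed.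

Lemma dualB x y : f (x - y) = f x - f y.
Proof. by rewrite dualD dualN. Qed.

Lemma dual_sum (I : Type) (r : seq I) (P : pred I) (F : I -> X) :
  f (\sum_(i <- r | P i) F i) = \sum_(i <- r | P i) f (F i).
Proof. exact: (big_morph f dualD dual0). Qed.

Lemma dual_bounded : exists C, forall x, `|f x| <= C * `|x|.
Proof. by apply/linear_continuousP; [exact: f_dual.1|exact: f_dual.2]. Qed.

Lemma dnorm_ub x : `|x| <= 1 -> `|f x| <= dnorm f.
Proof.
move=> x1; apply: ub_le_sup; last by exists x.
have [C fC] := dual_bounded; exists `|C| => _ [y /= y1 <-].
apply: le_trans (fC y) _; apply: le_trans (ler_wpM2r (normr_ge0 y) (ler_norm C)) _.
by rewrite ler_piMr.
Qed.

Lemma dnorm_ge0 : 0 <= dnorm f.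
Proof. by have := @dnorm_ub 0; rewrite normr0 ler01 => /(_ isT); apply: le_trans. Qed.

Lemma dual_le_dnorm x : `|f x| <= dnorm f * `|x|.
Proof.
have [->|x_neq0] := eqVneq x 0; first by rewrite dual0 !normr0 mulr0.
have nx0 : 0 < `|x| by rewrite normr_gt0.
rewrite -ler_pdivrMr // mulrC -[`|x|^-1]ger0_norm ?invr_ge0 ?(ltW nx0) // -normrM -dualZ.
by apply: dnorm_ub; rewrite normrZ ger0_norm ?invr_ge0 ?(ltW nx0) // mulVf ?gt_eqF.
Qed.

Lemma dnorm_le C : (forall x, `|x| <= 1 -> `|f x| <= C) -> dnorm f <= C.
Proof.
move=> fC; apply: ge_sup; first by exists `|f 0|, 0 => //=; rewrite normr0.
by move=> _ [x /= x1 <-]; apply: fC.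
Qed.

End ContinuousLinearFunctionals.

Section PositiveFunctionals.
Variables (R : realType) (E : completeNormedModType R) (L : BLattice R E).
Local Notation le := (ble L).
Local Notation meet := (bmeet L).
Local Notation abs := (babs L).

Lemma posdual_le2 (f : E -> R) x y : is_dual f -> dle L (fun _ => 0) f ->
  le x y -> f x <= f y.
Proof. by move=> f_dual f_ge0 /ble_subr_ge0 /f_ge0; rewrite dualB // subr_ge0. Qed.

Lemma posdual_abs (f : E -> R) x : is_dual f -> dle L (fun _ => 0) f ->
  `|f x| <= f (abs x).
Proof.
move=> f_dual f_ge0; rewrite ler_norml; apply/andP; split.
  by rewrite lerNl -(dualN f_dual); apply: posdual_le2 => //; apply: bjoin_ubr.
by apply: posdual_le2 => //; apply: bjoin_ubl.
Qed.

Lemma posdual_dnorm_gt (f : E -> R) eps : is_dual f -> dle L (fun _ => 0) f ->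
  eps < dnorm f -> exists x, [/\ le 0 x, `|x| <= 1 & eps < f x].
Proof.
move=> f_dual f_ge0; apply: contraPP => /forallNP f_small.
apply/negP; rewrite -leNgt; apply: dnorm_le => // x x1.
apply: le_trans (posdual_abs x f_dual f_ge0) _; rewrite leNgt; apply/negP => eps_lt.
by apply: (f_small (abs x)); split; rewrite ?bnorm_babs //; apply: babs_ge0.
Qed.

Section DisjointSums.
Variables (d : nat -> E) (v : E).
Hypotheses (d_ge0 : forall n, le 0 (d n)) (d_le : forall n, le (d n) v).
Hypothesis d_disj : pairwise_disjoint L d.

Lemma bmeet_sum_disjoint N m : (N <= m)%N -> meet (\sum_(k < N) d k) (d m) = 0.
Proof.
elim: N => [_|N IH Nm].
  by rewrite big_ord0; apply: bmeet_ge0_eq0 => //; [apply: ble_refl|apply: bmeet_lbl].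
have sum_ge0 : le 0 (\sum_(k < N) d k) by apply: ble0_sum.
rewrite big_ord_recr /=; apply: bmeet_ge0_eq0 => //; first exact: ble0D.
apply: ble_trans (bmeetDl_le sum_ge0 (d_ge0 N) (d_ge0 m)) _.
by rewrite IH 1?ltnW // d_disj ?add0r; [apply: ble_refl|rewrite ltn_eqF].
Qed.

Lemma disjoint_sum_le N : le (\sum_(k < N) d k) v.
Proof.
elim: N => [|N IH]; first by rewrite big_ord0; apply: ble_trans (d_ge0 0) (d_le 0).
by rewrite big_ord_recr /= (addr_bjoin_bmeet L) bmeet_sum_disjoint // addr0; apply: bjoin_lub.
Qed.

End DisjointSums.

Lemma pairwise_disjoint_mask (d : nat -> E) (b : pred nat) : (forall n, le 0 (d n)) ->
  pairwise_disjoint L d -> pairwise_disjoint L (fun k => if b k then d k else 0).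
Proof.
move=> d_ge0 d_disj n m nm.
have meetx0 x : le 0 x -> meet x 0 = 0.
  by move=> x0; apply: bmeet_ge0_eq0 => //; [apply: ble_refl|apply: bmeet_lbr].
case: (b n); case: (b m) => /=.
- exact: d_disj.
- exact: meetx0.
- by rewrite bmeetC meetx0.
- by apply: meetx0; apply: ble_refl.
Qed.

Lemma order_bounded_disjoint_weakly_null (d : nat -> E) v :
  (forall n, le 0 (d n)) -> (forall n, le (d n) v) -> pairwise_disjoint L d ->
  weakly_null d.
Proof.
move=> d_ge0 d_le d_disj f f_dual.
(* Splitting the indices by the sign of f (d k) bounds the partial sums of
   |f (d k)| by the values of f at two sums of disjoint d k, both in [0, v]. *)
pose P k := 0 <= f (d k).
pose mask (b : pred nat) k := if b k then d k else 0.
have mask_bound b N : `|f (\sum_(k < N) mask b k)| <= dnorm f * `|v|.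
  have mask_ge0 k : le 0 (mask b k) by rewrite /mask; case: (b k); last apply: ble_refl.
  have mask_le k : le (mask b k) v.
    by rewrite /mask; case: (b k); [apply: d_le|apply: ble_trans (d_ge0 0) (d_le 0)].
  apply: le_trans (dual_le_dnorm f_dual _) _; apply: ler_wpM2l; first exact: dnorm_ge0.
  apply: bnorm_le; first exact: ble0_sum.
  by apply: disjoint_sum_le => //; apply: pairwise_disjoint_mask.
have normE k : `|f (d k)| = f (mask P k) - f (mask (predC P) k).
  rewrite /mask /= /P; case: leP => [fd0|fd0]; rewrite (dual0 f_dual) ?subr0 ?sub0r.
    exact: ger0_norm.
  exact: ltr0_norm.
have series_le N : series (fun k => `|f (d k)|) N <= 2 * (dnorm f * `|v|).
  rewrite /series /= big_mkord; under eq_bigr do rewrite normE.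
  rewrite sumrB -!(dual_sum f_dual) mulr2n mulrDl mul1r.
  apply: le_trans (ler_norm _) (le_trans (ler_normB _ _) _).
  by apply: lerD; apply: mask_bound.
apply: norm_cvg0; apply: cvg_series_cvg_0; apply: nondecreasing_is_cvgn.
  by apply/nondecreasing_seqP => n; rewrite seriesSr lerDl.
by exists (2 * (dnorm f * `|v|)) => _ [n _ <-].
Qed.

Lemma disjoint_uaw_null (d : nat -> E) : (forall n, le 0 (d n)) ->
  pairwise_disjoint L d -> uaw_null L d.
Proof.
move=> d_ge0 d_disj u u0; rewrite (_ : (fun n => _) = fun n => meet (d n) u); last first.
  by apply: funext => n; rewrite babs_id.
apply: (order_bounded_disjoint_weakly_null (v := u)) => [n|n|n m nm].
- exact: bmeet_ge0.
- exact: bmeet_lbr.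
- apply: bmeet_ge0_eq0; [exact: bmeet_ge0|exact: bmeet_ge0|].
  by rewrite -(d_disj _ _ nm); apply: bmeet_le2; apply: bmeet_lbl.
Qed.

End PositiveFunctionals.

Section RankOneOperators.
Variables (R : realType) (X Y : normedModType R) (f : X -> R) (y : Y).
Hypothesis f_dual : is_dual f.

Lemma rank_one_operator : is_operator (fun x => f x *: y).
Proof.
split=> [a x x'|x]; first by rewrite f_dual.1 scalerDl scalerA.
exact: cvgZr_tmp (f_dual.2 x).
Qed.

Lemma rank_one_weak_DP : weak_DP (fun x => f x *: y).
Proof.
move=> x g x_null g_null.
have g_y : (fun n => g n y) @ \oo --> (0 : R).
  apply: (g_null.2 (fun h => h y)); split=> [//|]; exists `|y| => h h_dual.
  by rewrite mulrC; apply: dual_le_dnorm.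
rewrite (_ : (fun n => _) = fun n => f (x n) * g n y); last first.
  by apply: funext => n; rewrite dualZ //; apply: g_null.1.
by rewrite -(mulr0 0); apply: cvgM; [apply: x_null|].
Qed.

End RankOneOperators.

Lemma weakly_null_of_uaw_null (R : realType) (E F : completeNormedModType R)
    (L : BLattice R E) (y : F) :
  (forall T : E -> F, is_operator T -> weak_DP T -> uaw_DP L T) -> y != 0 ->
  forall x : nat -> E, (exists M, forall n, `|x n| <= M) -> uaw_null L x ->
  weakly_null x.
Proof.
move=> uawDP y_neq0 x x_bd x_uaw f f_dual.
have := uawDP _ (rank_one_operator y f_dual) (rank_one_weak_DP y f_dual) x x_bd x_uaw.
move=> /(cvgMr_tmp (b := `|y|^-1)); rewrite mul0r => Tx0; apply: norm_cvg0.
rewrite (_ : (fun n => _) = fun n => `|f (x n) *: y| * `|y|^-1) //.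
by apply: funext => n; rewrite normrZ mulfK ?normr_eq0.
Qed.

Lemma order_continuous_norm_trivial (R : realType) (F : completeNormedModType R)
    (L : BLattice R F) : (forall y : F, y = 0) -> order_continuous_norm L.
Proof.
move=> F0 I leI x [[i _] _] _ _ _ eps eps_gt0.
by exists i => j _; rewrite (F0 (x j)) normr0 ltW.
Qed.

Section PositiveCone.
Variables (R : realType) (E : completeNormedModType R) (L : BLattice R E).
Local Notation le := (ble L).

Lemma cvg_ble0 (z : nat -> E) w : z @ \oo --> w ->
  (\forall n \near \oo, le 0 (z n)) -> le 0 w.
Proof.
move=> zw z_ge0.
have bneg_le n : le 0 (z n) -> `|bneg L w| <= `|w - z n|.
  move=> zn0; rewrite -[`|w - z n|]normrN opprB -[`|z n - w|](bnorm_babs L).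
  apply: bnorm_le; first exact: bneg_ge0.
  apply: bjoin_lub; last exact: babs_ge0.
  apply: ble_trans (bjoin_ubl L _ _); rewrite -[X in le X _]add0r.
  exact: ble_add.
have dist0 : (fun n => `|w - z n|) @ \oo --> (0 : R).
  by rewrite -(normr0 E) -(subrr w); apply: cvg_norm; apply: cvgB => //; apply: cvg_cst.
have : `|bneg L w| <= 0.
  apply: (closed_cvg _ (@closed_ge _ `|bneg L w|) _ _ dist0).
  by apply: filterS z_ge0 => n /bneg_le.
rewrite normr_le0 => /eqP w_neg0.
by rewrite -(bpos_subr_bneg L w) w_neg0 subr0; apply: bpos_ge0.
Qed.

Lemma ble_limn_series (v : nat -> E) : (forall k, le 0 (v k)) ->
  cvgn (series v) -> forall k, le (v k) (limn (series v)).
Proof.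
move=> v_ge0 v_cvg k; apply/ble_subr_ge0.
apply: (@cvg_ble0 (fun N => series v N - v k)).
  by apply: cvgB => //; apply: cvg_cst.
near=> N; apply/ble_subr_ge0.
have kN : (k < N)%N by near: N; apply: nbhs_infty_gt.
rewrite /series /= big_mkord (bigD1 (Ordinal kN)) //= -[X in le X _]addr0.
by apply: bleDl; apply: ble0_sum.
Unshelve. all: by end_near.
Qed.

Lemma cvgn_series_scaled_geometric (x : nat -> E) (r : R) : 0 <= r < 1 ->
  (forall k, `|x k| <= 1) -> cvgn (series (fun k => r ^+ k *: x k)).
Proof.
move=> /andP[r0 r1] x1; apply: normed_cvg.
apply: (@series_le_cvg _ _ (geometric 1 r)) => [k|k|k|] /=.
- exact: normr_ge0.
- by rewrite mul1r exprn_ge0.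
- by rewrite normrZ ger0_norm ?exprn_ge0 // mul1r ler_piMr ?exprn_ge0.
- by apply: is_cvg_geometric_series; rewrite ger0_norm.
Qed.

End PositiveCone.

Section DecreasingDualNet.
Variables (R : realType) (E : completeNormedModType R) (L : BLattice R E).
Local Notation le := (ble L).
Variables (I : Type) (leI : I -> I -> Prop) (f : I -> E -> R).
Hypothesis leI_directed : directed leI.
Hypothesis f_dual : forall i, is_dual (f i).
Hypothesis f_decr : forall i j, leI i j -> dle L (f j) (f i).
Hypothesis f_ge0 : forall i, dle L (fun _ => 0) (f i).

Let i0 : I := projT1 (cid leI_directed.1).

Definition net_inf (x : E) : R := inf [set f i x | i in [set: I]].

Lemma net_inf_le x i : le 0 x -> net_inf x <= f i x.
Proof.
by move=> x0; apply: ge_inf; [exists 0 => _ [j _ <-]; apply: f_ge0|exists i].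
Qed.

Lemma net_inf_ge x c : (forall i, c <= f i x) -> c <= net_inf x.
Proof. by move=> c_le; apply: lb_le_inf; [exists (f i0 x), i0|move=> _ [i _ <-]]. Qed.

Lemma net_inf_lt x c : net_inf x < c -> exists i, f i x < c.
Proof.
have ne : [set f i x | i in [set: I]] !=set0 by exists (f i0 x), i0.
by move=> /(inf_lt ne) [_ [i _ <-] fi]; exists i.
Qed.

Lemma net_inf_ge0 x : le 0 x -> 0 <= net_inf x.
Proof. by move=> x0; apply: net_inf_ge => i; apply: f_ge0. Qed.

Lemma net_inf0 : net_inf 0 = 0.
Proof.
apply/eqP; rewrite eq_le net_inf_ge0 ?andbT; last exact: ble_refl.
by rewrite -(dual0 (f_dual i0)); apply: net_inf_le; apply: ble_refl.
Qed.

Lemma net_infD x y : le 0 x -> le 0 y -> net_inf (x + y) = net_inf x + net_inf y.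
Proof.
move=> x0 y0; apply/eqP; rewrite eq_le; apply/andP; split; last first.
  by apply: net_inf_ge => i; rewrite dualD //; apply: lerD; apply: net_inf_le.
apply/ler_addgt0Pr => e e0; have e2 : 0 < e / 2 by rewrite divr_gt0.
have [i fi] := net_inf_lt (ltr_pwDr e2 (lexx (net_inf x))).
have [j fj] := net_inf_lt (ltr_pwDr e2 (lexx (net_inf y))).
have [k [ik jk]] := leI_directed.2.2.2 i j.
apply: le_trans (net_inf_le k (ble0D x0 y0)) _; rewrite dualD //.
have := f_decr ik x0; have := f_decr jk y0; lra.
Qed.

Lemma net_infZ a x : 0 <= a -> le 0 x -> net_inf (a *: x) = a * net_inf x.
Proof.
move=> a0 x0; have [->|a_neq0] := eqVneq a 0.
  by rewrite scale0r mul0r net_inf0.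
have a_gt0 : 0 < a by rewrite lt0r a_neq0.
apply/eqP; rewrite eq_le; apply/andP; split; last first.
  by apply: net_inf_ge => i; rewrite dualZ // ler_wpM2l // net_inf_le.
rewrite -ler_pdivrMl //; apply: net_inf_ge => i.
by rewrite ler_pdivrMl // -dualZ //; apply: net_inf_le; apply: ble0Z.
Qed.

(* The Riesz-Kantorovich formula for the infimum of the net in E'. *)
Definition net_inf_fun (x : E) : R := net_inf (bpos L x) - net_inf (bneg L x).

Lemma net_inf_funE x a b : le 0 a -> le 0 b -> x = a - b ->
  net_inf_fun x = net_inf a - net_inf b.
Proof.
move=> a0 b0 xE; have : bpos L x + b = a + bneg L x.
  have -> : a = x + b by rewrite xE subrK.
  by rewrite -[X in _ = X + b + _](bpos_subr_bneg L x) addrAC subrK.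
move=> /(congr1 net_inf).
rewrite (net_infD (bpos_ge0 L x) b0) (net_infD a0 (bneg_ge0 L x)) /net_inf_fun; lra.
Qed.

Lemma net_inf_fun_linear a x y :
  net_inf_fun (a *: x + y) = a * net_inf_fun x + net_inf_fun y.
Proof.
have px := bpos_ge0 L x; have nx := bneg_ge0 L x.
have py := bpos_ge0 L y; have ny := bneg_ge0 L y.
have [a0|a_lt0] := leP 0 a.
  have ax := ble0Z a0 px; have an := ble0Z a0 nx.
  rewrite (@net_inf_funE _ (a *: bpos L x + bpos L y) (a *: bneg L x + bneg L y)).
  - by rewrite !net_infD // !net_infZ // /net_inf_fun; ring.
  - exact: ble0D.
  - exact: ble0D.
  - by rewrite -{1}(bpos_subr_bneg L x) -{1}(bpos_subr_bneg L y) scalerBr opprD addrACA.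
have na0 : 0 <= - a by rewrite oppr_ge0 ltW.
have ax := ble0Z na0 px; have an := ble0Z na0 nx.
rewrite (@net_inf_funE _ ((- a) *: bneg L x + bpos L y) ((- a) *: bpos L x + bneg L y)).
- by rewrite !net_infD // !net_infZ // /net_inf_fun; ring.
- exact: ble0D.
- exact: ble0D.
- rewrite -{1}(bpos_subr_bneg L x) -{1}(bpos_subr_bneg L y) !scaleNr scalerBr.
  by rewrite opprD opprK [in RHS]addrACA [- _ + a *: _]addrC.
Qed.

Lemma net_inf_fun_bound x : `|net_inf_fun x| <= 2 * dnorm (f i0) * `|x|.
Proof.
have bound z : le 0 z -> net_inf z <= dnorm (f i0) * `|z|.
  move=> z0; apply: le_trans (net_inf_le i0 z0) _.
  exact: le_trans (ler_norm _) (dual_le_dnorm (f_dual i0) z).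
have := bound _ (bpos_ge0 L x); have := bound _ (bneg_ge0 L x).
have := net_inf_ge0 (bpos_ge0 L x); have := net_inf_ge0 (bneg_ge0 L x).
have d0 := dnorm_ge0 (f_dual i0).
have := ler_wpM2l d0 (bnorm_bpos L x); have := ler_wpM2l d0 (bnorm_bneg L x).
rewrite /net_inf_fun ler_norml; move=> *; apply/andP; split; nra.
Qed.

Lemma net_inf_fun_dual : is_dual net_inf_fun.
Proof.
split; first exact: net_inf_fun_linear.
apply/linear_continuousP; first exact: net_inf_fun_linear.
by exists (2 * dnorm (f i0)); exact: net_inf_fun_bound.
Qed.

Lemma net_inf_fun_ge0E x : le 0 x -> net_inf_fun x = net_inf x.
Proof.
move=> x0; rewrite (@net_inf_funE x x 0) ?subr0 //; last exact: ble_refl.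
by rewrite net_inf0 subr0.
Qed.

Lemma dual_net_eventually_lt :
  (forall h, is_dual h -> (forall i, dle L h (f i)) -> dle L h (fun _ => 0)) ->
  forall x eta, 0 < eta -> exists i, forall j, leI i j -> f j x < eta.
Proof.
move=> f_inf x eta eta0; have x0 := bpos_ge0 L x.
have : net_inf (bpos L x) <= 0.
  rewrite -net_inf_fun_ge0E //; apply: (f_inf _ net_inf_fun_dual) => // i z z0.
  by rewrite net_inf_fun_ge0E // net_inf_le.
move=> /le_lt_trans /(_ eta0) /net_inf_lt [i fi]; exists i => j ij.
apply: le_lt_trans fi; apply: le_trans (f_decr ij x0).
by apply: posdual_le2 => //; apply: bjoin_ubl.
Qed.

End DecreasingDualNet.

Section DisjointSequenceOfNet.
Variables (R : realType) (E : completeNormedModType R) (L : BLattice R E).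
Local Notation le := (ble L).
Local Notation meet := (bmeet L).
Variables (I : Type) (leI : I -> I -> Prop) (f : I -> E -> R) (eps : R).
Hypothesis leI_directed : directed leI.
Hypothesis f_dual : forall i, is_dual (f i).
Hypothesis f_decr : forall i j, leI i j -> dle L (f j) (f i).
Hypothesis f_ge0 : forall i, dle L (fun _ => 0) (f i).
Hypothesis eps_gt0 : 0 < eps.
Hypothesis next_spec : forall (j : I) (s : E) (n : nat), exists p : I * E,
  [/\ leI j p.1, f p.1 s < eps / 4 ^+ n.+1, le 0 p.2, `|p.2| <= 1 & eps < f p.1 p.2].
Hypothesis disjoint_weakly_null : forall d : nat -> E, (forall n, le 0 (d n)) ->
  pairwise_disjoint L d -> (forall n, `|d n| <= 1) -> weakly_null d.

Let next j s n : I * E := projT1 (cid (next_spec j s n)).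

(* stage n = (i_(n-1), x_0 + ... + x_(n-1)), from which step n picks
   (idx n, elt n) = (i_n, x_n). *)
Let stage : nat -> I * E := fix stage n :=
  if n is m.+1 then let p := next (stage m).1 (stage m).2 m in (p.1, (stage m).2 + p.2)
  else (projT1 (cid leI_directed.1), 0).

Let idx n : I := (next (stage n).1 (stage n).2 n).1.
Let elt n : E := (next (stage n).1 (stage n).2 n).2.
Let psum n : E := (stage n).2.

Let stage_spec n : [/\ leI (stage n).1 (idx n), f (idx n) (psum n) < eps / 4 ^+ n.+1,
  le 0 (elt n), `|elt n| <= 1 & eps < f (idx n) (elt n)].
Proof. exact: projT2 (cid (next_spec (stage n).1 (stage n).2 n)). Qed.

Let elt_ge0 n : le 0 (elt n). Proof. by case: (stage_spec n). Qed.

Let elt_le1 n : `|elt n| <= 1. Proof. by case: (stage_spec n). Qed.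

Let psum_ge0 n : le 0 (psum n).
Proof. by elim: n => [|n IH]; [apply: ble_refl|apply: ble0D => //; apply: elt_ge0]. Qed.

Let elt_le_psum k m : (k < m)%N -> le (elt k) (psum m).
Proof.
elim: m => [//|m IH]; rewrite ltnS leq_eqVlt => /orP[/eqP ->|km].
  by rewrite -[X in le X _]add0r; apply: ble_add; apply: psum_ge0.
by rewrite -[X in le X _]addr0; apply: bleD; [apply: IH|apply: elt_ge0].
Qed.

Let idx0_le n : leI (idx 0) (idx n).
Proof.
elim: n => [|n IH]; first exact: leI_directed.2.1.
by case: (stage_spec n.+1) => idx_le *; apply: leI_directed.2.2.1 IH idx_le.
Qed.

Let r : R := 2^-1.

Let r_ge0 : 0 <= r. Proof. by rewrite invr_ge0. Qed.

Let u : E := limn (series (fun k => r ^+ k *: elt k)).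

Let elt_le_u k : le (r ^+ k *: elt k) u.
Proof.
apply: ble_limn_series => [n|]; first by apply: ble0Z; [apply: exprn_ge0|apply: elt_ge0].
apply: cvgn_series_scaled_geometric; last exact: elt_le1.
by rewrite r_ge0 invf_lt1 ?ltr1n.
Qed.

Let y n : E := bpos L (elt n - 4 ^+ n *: psum n - r ^+ n *: u).

Let weights_ge1 n m : (n <= m)%N -> 1 <= r ^+ n * r ^+ m * 4 ^+ m.
Proof.
move=> nm; have r2 : r * 2 = 1 by rewrite /r mulVf ?pnatr_eq0.
rewrite -mulrA (_ : r ^+ m * 4 ^+ m = 2 ^+ m); last first.
  by rewrite -exprMn -[4]/(2 * 2)%:R natrM mulrA r2 mul1r.
apply: le_trans (_ : 1 <= r ^+ m * 2 ^+ m) _.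
  by rewrite -exprMn r2 expr1n.
apply: ler_wpM2r; first exact: exprn_ge0.
by apply: ler_wiXn2l => //; rewrite invf_le1 ?ler1n.
Qed.

Let u_ge0 : le 0 u.
Proof. by apply: ble_trans (elt_ge0 0) _; rewrite -[elt 0]scale1r -(expr0 r); apply: elt_le_u. Qed.

Let y_disjoint_lt n m : (n < m)%N -> meet (y n) (y m) = 0.
Proof.
move=> nm; have a_gt0 : 0 < r ^+ n * r ^+ m by rewrite mulr_gt0 // exprn_gt0 // invr_gt0.
have yn_le : le (y n) (bpos L (elt n - (r ^+ n * r ^+ m) *: elt m)).
  apply: bpos_le2; rewrite addrAC; apply: ble_subr_pos.
    by apply: ble0Z; [apply: exprn_ge0|apply: psum_ge0].
  apply: bleDl; apply/bleN2; rewrite -scalerA.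
  by apply: ble_scale; [apply: exprn_ge0|apply: elt_le_u].
have ym_le : le (y m) (bpos L (elt m - 4 ^+ m *: elt n)).
  apply: bpos_le2; apply: ble_subr_pos; first by apply: ble0Z; [apply: exprn_ge0|apply: u_ge0].
  apply: bleDl; apply/bleN2.
  by apply: ble_scale; [apply: exprn_ge0|apply: elt_le_psum].
apply: bmeet_ge0_eq0; [exact: bpos_ge0|exact: bpos_ge0|].
rewrite -(bmeet_bpos_subr_eq0 (elt_ge0 n) (elt_ge0 m) a_gt0 (b := 4 ^+ m)).
- exact: bmeet_le2.
- by rewrite exprn_ege1 ?ler1n.
- exact/weights_ge1/ltnW.
Qed.

Let y_disjoint : pairwise_disjoint L y.
Proof.
move=> n m; rewrite neq_ltn => /orP[nm|mn]; first exact: y_disjoint_lt.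
by rewrite bmeetC; apply: y_disjoint_lt.
Qed.

Let y_le1 n : `|y n| <= 1.
Proof.
apply: le_trans (elt_le1 n); apply: bnorm_le; first exact: bpos_ge0.
rewrite -(bpos_id (elt_ge0 n)); apply: bpos_le2.
apply: ble_subr_pos; first by apply: ble0Z; [apply: exprn_ge0|apply: u_ge0].
apply: ble_subr_pos; first by apply: ble0Z; [apply: exprn_ge0|apply: psum_ge0].
exact: ble_refl.
Qed.

Let y_lower_bound n : eps - eps / 4 - r ^+ n * f (idx 0) u <= f (idx 0) (y n).
Proof.
apply: le_trans (f_decr (idx0_le n) (bpos_ge0 L _)).
apply: le_trans (posdual_le2 (f_dual _) (f_ge0 _) (bjoin_ubl L _ 0)).
rewrite !(dualB (f_dual (idx n))) !(dualZ (f_dual (idx n))).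
case: (stage_spec n) => _ psum_small _ _ elt_big.
have u_le := ler_wpM2l (exprn_ge0 n r_ge0) (f_decr (idx0_le n) u_ge0).
have : 4 ^+ n * f (idx n) (psum n) < eps / 4.
  have pow4_gt0 : 0 < (4 : R) ^+ n by rewrite exprn_gt0.
  have -> : eps / 4 = 4 ^+ n * (eps / 4 ^+ n.+1).
    by rewrite exprS; field; rewrite gt_eqF.
  by rewrite ltr_pM2l.
lra.
Qed.

Lemma disjoint_sequence_absurd : False.
Proof.
have gy := disjoint_weakly_null (fun n => bpos_ge0 L _) y_disjoint y_le1 (f_dual (idx 0)).
have rg : (fun n => r ^+ n * f (idx 0) u) @ \oo --> (0 : R).
  rewrite -(mul0r (f (idx 0) u)); apply: cvgMr_tmp; apply: cvg_expr.
  by rewrite ger0_norm // invf_lt1 ?ltr1n.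
have lim : (fun n => f (idx 0) (y n) + r ^+ n * f (idx 0) u) @ \oo --> (0 + 0 : R).
  exact: cvgD.
suff : eps - eps / 4 <= 0 + 0 by rewrite addr0; have := eps_gt0; lra.
apply: (closed_cvg _ (@closed_ge _ (eps - eps / 4)) _ _ lim).
by apply: nearW => n /=; have := y_lower_bound n; lra.
Qed.

End DisjointSequenceOfNet.

Lemma dual_order_continuous_of_disjoint_weakly_null (R : realType)
    (E : completeNormedModType R) (L : BLattice R E) :
  (forall d : nat -> E, (forall n, ble L 0 (d n)) -> pairwise_disjoint L d ->
    (forall n, `|d n| <= 1) -> weakly_null d) ->
  dual_order_continuous_norm L.
Proof.
move=> disj_wnull I leI f leI_dir f_dual f_decr f_ge0 f_inf eps eps_gt0.
apply: contrapT => not_small.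
have big_norm j : exists2 i, leI j i & eps < dnorm (f i).
  apply: contrapT => /forall2NP j_small; apply: not_small; exists j => i ji.
  by case: (j_small i) => // /negP; rewrite -leNgt.
apply: (disjoint_sequence_absurd leI_dir f_dual f_decr f_ge0 eps_gt0 _ disj_wnull).
move=> j s n.
have eta_gt0 : 0 < eps / 4 ^+ n.+1 by rewrite divr_gt0 ?exprn_gt0.
have [i1 i1_small] := dual_net_eventually_lt leI_dir f_dual f_decr f_ge0 f_inf s eta_gt0.
have [k [jk i1k]] := leI_dir.2.2.2 j i1.
have [i ki fi_big] := big_norm k.
have [x [x_ge0 x_le1 fx_big]] := posdual_dnorm_gt (f_dual i) (f_ge0 i) fi_big.
exists (i, x); split => //=; first exact: leI_dir.2.2.1 _ _ _ jk ki.
by apply: i1_small; apply: leI_dir.2.2.1 _ _ _ i1k ki.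
Qed.

Unset Implicit Arguments.

Theorem theorem4p3 (R : realType) (E F : completeNormedModType R)
    (LE : BLattice R E) (LF : BLattice R F) :
  (forall T : E -> F, is_operator T -> weak_DP T -> uaw_DP LE T) ->
  dual_order_continuous_norm LE \/ order_continuous_norm LF.
Proof.
move=> uawDP; have [[y y_neq0]|F0] := pselect (exists y : F, y != 0).
  left; apply: dual_order_continuous_of_disjoint_weakly_null => d d_ge0 d_disj d_le1.
  apply: (weakly_null_of_uaw_null uawDP y_neq0); first by exists 1.
  exact: disjoint_uaw_null.
right; apply: order_continuous_norm_trivial => y.
by have [//|y_neq0] := eqVneq y 0; case: F0; exists y.
Qed.
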